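(* The problem of classifying $m\times n\times 3$ spatial matrices up to equivalence is wild, i.e., it contains the problem of classifying pairs of square matrices up to simultaneous similarity.
   Context: Matrices are over a field $k$. An $m\times n\times q$ spatial matrix is a family $[a_{ijk}]_{i=1}^m{}_{j=1}^n{}_{k=1}^q$ of elements of $k$ ($m,n$ arbitrary here, $q=3$). Two spatial matrices $[a_{ijk}],[a'_{ijk}]$ are equivalent if $a'_{i'j'k'}=\sum_{i,j,k}a_{ijk}r_{ii'}s_{jj'}t_{kk'}$ for nonsingular matrices $R=[r_{ii'}]$, $S=[s_{jj'}]$, $T=[t_{kk'}]$. The pair problem: pairs $(X,Y)$ of $r\times r$ matrices ($r$ arbitrary) up to simultaneous similarity $(X,Y)\mapsto(S^{-1}XS,S^{-1}YS)$. A matrix problem $\mathcal A$ is given by a set $\mathcal A_1$ of $a$-tuples of matrices and admissible transformations (''$A$ reduces to $A'$''). $\mathcal B$ contains $\mathcal A$ if there is a $b$-tuple $\mathcal T(x_1,\dots,x_a)$ of matrices whose entries are noncommutative polynomials in $x_1,\dots,x_a$ (substitution done blockwise, scalars $c$ becoming $cI$) such that (i) $\mathcal T(A)\in\mathcal B_1$ for $A\in\mathcal A_1$, and (ii) $A$ reduces to $A'$ iff $\mathcal T(A)$ reduces to $\mathcal T(A')$. A problem is wild if it contains the pair problem. *)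

From HB Require Import structures.
From mathcomp Require Import all_boot all_order all_algebra.
Set Implicit Arguments. Unset Strict Implicit. Unset Printing Implicit Defensive.
Import GRing.Theory.
Local Open Scope ring_scope.

(* Noncommutative polynomials in two variables x1, x2 with coefficients in F,
   given as formal expressions (only their evaluation is ever used). *)
Inductive ncpoly (F : Type) : Type :=
| NCconst of F
| NCx1
| NCx2
| NCadd of ncpoly F & ncpoly F
| NCmul of ncpoly F & ncpoly F.
Arguments NCx1 {F}.
Arguments NCx2 {F}.

Fixpoint nceval (F : fieldType) (r : nat) (P : ncpoly F) (X Y : 'M[F]_r)
  : 'M[F]_r :=
  match P with
  | NCconst c => c%:M
  | NCx1 => X
  | NCx2 => Y
  | NCadd P1 P2 => nceval P1 X Y + nceval P2 X Y
  | NCmul P1 P2 => nceval P1 X Y *m nceval P2 X Y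
  end.

Definition pair_similar (F : fieldType) (r : nat) (X Y X' Y' : 'M[F]_r) : Prop :=
  exists S : 'M[F]_r, S \in unitmx /\
    X' = invmx S *m X *m S /\ Y' = invmx S *m Y *m S.

Definition spatial (F : Type) (m n : nat) := 'I_m -> 'I_n -> 'I_3 -> F.

Definition spatial_equiv (F : fieldType) (m n : nat) (A A' : spatial F m n) : Prop :=
  exists (R : 'M[F]_m) (S : 'M[F]_n) (T : 'M[F]_3),
    [/\ R \in unitmx, S \in unitmx, T \in unitmx &
      forall i' j' k', A' i' j' k' =
        \sum_(i < m) \sum_(j < n) \sum_(k < 3) A i j k * R i i' * S j j' * T k k'].

Definition ncsubst (F : fieldType) (p q r : nat) (P : 'I_p -> 'I_q -> ncpoly F)
  (X Y : 'M[F]_r) : 'M[F]_(\sum_(i < p) r, \sum_(j < q) r) :=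
  @mxblock F p q (fun _ => r) (fun _ => r) (fun i j => nceval (P i j) X Y).

Definition spatial_of_triple (F : fieldType) (p q r : nat)
  (T : 'I_3 -> 'I_p -> 'I_q -> ncpoly F) (X Y : 'M[F]_r)
  : spatial F (\sum_(i < p) r) (\sum_(j < q) r) :=
  fun i j k => ncsubst (T k) X Y i j.

(* The triple is a core 2 x 4 block triple carrying x1 and x2, direct-summed with a
   tail of identity blocks: one in slice 0, two in slice 1 and four in slice 2.
   Similar pairs give equivalent spatial matrices by block-diagonal conjugation.
   Conversely an equivalence (R, S, T) reads L (sum_k T_kk' A_k) = A'_k' W for every
   slice k'.  The tail rows of L vanish on the core columns: otherwise the linear
   conditions that the core blocks impose on a column of T cut out a line, which would
   contain two columns of the invertible T.  Then the tail blocks of L and W are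
   invertible, and since 1, 2, 4 have distinct subset sums, comparing the ranks of the
   tail parts shows that T is diagonal.  The core blocks of the equation then force the
   core block of L to be diag(l, l) with l X = X' l and l Y = Y' l. *)

From mathcomp Require Import all_boot all_order all_algebra.
From mathcomp Require Import ring.
Set Implicit Arguments. Unset Strict Implicit. Unset Printing Implicit Defensive.
Import GRing.Theory.
Local Open Scope ring_scope.

Lemma split_lshift (m n : nat) (i : 'I_m) : split (lshift n i) = inl i.
Proof. exact: (unsplitK (inl i)). Qed.

Lemma split_rshift (m n : nat) (i : 'I_n) : split (rshift m i) = inr i.
Proof. exact: (unsplitK (inr i)). Qed.

Lemma sum_split_ord (V : nmodType) (p n : nat) (f : 'I_(p + n) -> V) :
  \sum_i f i = \sum_(a < p) f (lshift n a) + \sum_(m < n) f (rshift p m).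
Proof. exact: big_split_ord. Qed.

Lemma ord2P (a : 'I_2) : a = 0 \/ a = 1.
Proof. by case: a => [[|[|]] //= ?]; [left|right]; apply: val_inj. Qed.

Lemma ord3P (k : 'I_3) : [\/ k = 0, k = 1 | k = 2].
Proof.
by case: k => [[|[|[|]]] //= ?]; [apply: Or31|apply: Or32|apply: Or33]; apply: val_inj.
Qed.

Lemma ord3_two_others (j : 'I_3) : exists k1 k2, [/\ k1 != k2, j != k1 & j != k2].
Proof. by case: (ord3P j) => ->; [exists 1, 2|exists 0, 2|exists 0, 1]. Qed.

Lemma sum_ord2 (V : nmodType) (f : 'I_2 -> V) : \sum_i f i = f 0 + f 1.
Proof. by rewrite !big_ord_recl big_ord0 addr0; congr (f _ + f _); apply: val_inj. Qed.

Lemma sum_ord3 (V : nmodType) (f : 'I_3 -> V) : \sum_i f i = f 0 + f 1 + f 2.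
Proof.
by rewrite !big_ord_recl big_ord0 addr0 addrA; congr (f _ + f _ + f _); apply: val_inj.
Qed.

Lemma sum_ord4 (V : nmodType) (f : 'I_4 -> V) : \sum_i f i = f 0 + f 1 + f 2 + f 3.
Proof.
rewrite !big_ord_recl big_ord0 addr0 !addrA.
by congr (f _ + f _ + f _ + f _); apply: val_inj.
Qed.

Section BlockMatrices.
Variable R : pzRingType.

Lemma submxblockM (p q s : nat) (p_ : 'I_p -> nat) (q_ : 'I_q -> nat) (s_ : 'I_s -> nat)
    (A : 'M[R]_(\sum_i p_ i, \sum_j q_ j)) (B : 'M[R]_(\sum_j q_ j, \sum_k s_ k)) i k :
  submxblock (A *m B) i k = \sum_j submxblock A i j *m submxblock B j k.
Proof.
transitivity (submxblock ((\mxblock_(i, j) submxblock A i j) *m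
                          (\mxblock_(j, k) submxblock B j k)) i k).
  by rewrite !submxblockK.
by rewrite mul_mxblock mxblockK.
Qed.

Lemma submxblockZ (p q : nat) (p_ : 'I_p -> nat) (q_ : 'I_q -> nat) a
    (A : 'M[R]_(\sum_i p_ i, \sum_j q_ j)) i j :
  submxblock (a *: A) i j = a *: submxblock A i j.
Proof. by apply/matrixP => x y; rewrite !mxE. Qed.

Lemma submxblock_mxdiag (p r : nat) (D : 'I_p -> 'M[R]_r) i j :
  submxblock (\mxdiag_i D i : 'M_(\sum_(i < p) r)) i j = if i == j then D i else 0.
Proof. by rewrite /mxdiag mxblockK conform_mx_id. Qed.

Lemma submxblock1 (p r : nat) i j :
  submxblock (1%:M : 'M[R]_(\sum_(i < p) r)) i j = if i == j then 1%:M else 0.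
Proof. by rewrite -(mxdiagZ (p_ := fun _ : 'I_p => r)) submxblock_mxdiag. Qed.

End BlockMatrices.

Lemma unitmx_mxdiag_const (R : comUnitRingType) (p r : nat) (S : 'M[R]_r) :
  S \in unitmx -> (\mxdiag_(i < p) S : 'M_(\sum_(i < p) r)) \in unitmx.
Proof.
move=> uS; suff /mulmx1_unit[] : (\mxdiag_(i < p) S : 'M_(\sum_(i < p) r)) *m
  \mxdiag_(i < p) invmx S = 1%:M by [].
apply/mxblockP => i j; rewrite submxblockM submxblock1 (bigD1 i) //= big1 => [|k /negbTE nik].
  by rewrite !submxblock_mxdiag eqxx addr0; case: eqP => _; rewrite ?mulmxV ?mulmx0.
by rewrite submxblock_mxdiag eq_sym nik mul0mx.
Qed.

Section LowerRightBlock.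
Variables (R : comUnitRingType) (p n r : nat).
Implicit Types M N : 'M[R]_(\sum_(i < p + n) r).

Definition drsubmxblock M : 'M[R]_(\sum_(i < n) r) :=
  \mxblock_(i, j) submxblock M (rshift p i) (rshift p j).

Lemma drsubmxblockM M N :
  (forall i a, submxblock M (rshift p i) (lshift n a) = 0) ->
  drsubmxblock (M *m N) = drsubmxblock M *m drsubmxblock N.
Proof.
move=> M0; apply/mxblockP => i j; rewrite mul_mxblock !mxblockK submxblockM.
by rewrite sum_split_ord big1 ?add0r // => a _; rewrite M0 mul0mx.
Qed.

Lemma unitmx_drsubmxblock M N :
  (forall i a, submxblock M (rshift p i) (lshift n a) = 0) -> M *m N = 1%:M ->
  drsubmxblock M \in unitmx.
Proof.
move=> M0 MN1; suff /mulmx1_unit[] : drsubmxblock M *m drsubmxblock N = 1%:M by [].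
rewrite -drsubmxblockM // MN1; apply/mxblockP => i j.
by rewrite mxblockK !submxblock1 (inj_eq (@rshift_inj p n)).
Qed.

End LowerRightBlock.

Section LinearAlgebra.
Variable F : fieldType.

Lemma unitmx_cols_not_collinear (n : nat) (T : 'M[F]_n) k k' (v : 'cV[F]_n) a b :
  T \in unitmx -> k != k' -> col k T = a *: v -> col k' T = b *: v -> False.
Proof.
move=> uT nkk' Tk Tk'.
have T_inj (u : 'cV[F]_n) : T *m u = 0 -> u = 0.
  by move=> Tu0; rewrite -(mulKmx uT u) Tu0 mulmx0.
have /matrixP comb0 : b *: delta_mx k 0 - a *: delta_mx k' 0 = 0 :> 'cV[F]_n.
  by apply: T_inj; rewrite mulmxBr -!scalemxAr -!colE Tk Tk' !scalerA mulrC subrr.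
have := comb0 k 0; have := comb0 k' 0.
rewrite !mxE !eqxx eq_sym (negbTE nkk') /= !mulr0n !mulr1n mulr0 mulr1 sub0r.
move/eqP; rewrite oppr_eq0 => /eqP a0 _.
have /matrixP/(_ k 0) : delta_mx k 0 = 0 :> 'cV[F]_n.
  by apply: T_inj; rewrite -colE Tk a0 scale0r.
by rewrite !mxE !eqxx => /eqP; rewrite oner_eq0.
Qed.

(* The hypotheses on c say that [Y0 Y1] kills columns 0, 1 and 3 of the
   combination of the core slices with coefficients c. *)
Lemma core_annihilators_collinear (m n : nat) (Y0 Y1 : 'M[F]_(m, n)) :
  (Y0 != 0) || (Y1 != 0) ->
  exists v : 'cV[F]_3, forall c : 'cV[F]_3,
    (c 0 0 + c 1 0) *: Y0 = 0 -> c 0 0 *: Y1 = 0 ->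
    c 1 0 *: Y0 + (c 1 0 + c 2 0) *: Y1 = 0 -> exists a, c = a *: v.
Proof.
have scale_eq0 (e : F) (Z : 'M[F]_(m, n)) : Z != 0 -> e *: Z = 0 -> e = 0.
  by move=> nZ /eqP; rewrite scaler_eq0 (negbTE nZ) orbF => /eqP.
move=> nY; have [Y10|nY1] := eqVneq Y1 0; last first.
  exists (\col_i [:: 0; 1; -1]`_i) => c e0 e1 e2; exists (c 1 0).
  have c0 : c 0 0 = 0 := scale_eq0 _ _ nY1 e1.
  move: e0 e2; rewrite c0 add0r => ->; rewrite add0r => /(scale_eq0 _ _ nY1) c12.
  apply/matrixP => i j; rewrite ord1 !mxE.
  case: (ord3P i) => -> /=; rewrite ?c0 ?mulr0 ?mulr1 //.
  by apply/eqP; rewrite mulrN1 -addr_eq0 addrC c12.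
move: nY; rewrite Y10 eqxx orbF => nY0.
exists (\col_i [:: 0; 0; 1]`_i) => c e0 _ e2; exists (c 2 0).
move: e2; rewrite scaler0 addr0 => /(scale_eq0 _ _ nY0) c1.
move: e0; rewrite c1 addr0 => /(scale_eq0 _ _ nY0) c0.
apply/matrixP => i j; rewrite ord1 !mxE.
by case: (ord3P i) => -> /=; rewrite ?c0 ?c1 ?mulr0 ?mulr1.
Qed.

End LinearAlgebra.

Section SpatialMatrices.
Variable F : fieldType.

Definition slice (m n : nat) (A : spatial F m n) (k : 'I_3) : 'M[F]_(m, n) :=
  \matrix_(i, j) A i j k.

Lemma spatial_equivP (m n : nat) (A A' : spatial F m n) :
  spatial_equiv A A' <->
  exists (R : 'M[F]_m) (S : 'M[F]_n) (T : 'M[F]_3),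
    [/\ R \in unitmx, S \in unitmx, T \in unitmx &
      forall k', slice A' k' = R^T *m (\sum_k T k k' *: slice A k) *m S].
Proof.
have entryE (R : 'M[F]_m) (S : 'M[F]_n) (T : 'M[F]_3) k' i' j' :
    (R^T *m (\sum_k T k k' *: slice A k) *m S) i' j' =
    \sum_(i < m) \sum_(j < n) \sum_(k < 3) A i j k * R i i' * S j j' * T k k'.
  rewrite !mxE; under eq_bigr do rewrite !mxE mulr_suml.
  rewrite exchange_big /=; apply: eq_bigr => i _; apply: eq_bigr => j _.
  rewrite !mxE summxE mulr_sumr mulr_suml.
  by apply: eq_bigr => k _; rewrite !mxE; ring.
split=> -[R [S [T [uR uS uT eqA']]]]; exists R, S, T; split=> // k'.
  by apply/matrixP => i' j'; rewrite entryE mxE eqA'.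
by move=> i' j'; rewrite -entryE -eqA' mxE.
Qed.

Lemma nceval_conj (r : nat) (P : ncpoly F) (X Y S : 'M[F]_r) : S \in unitmx ->
  invmx S *m nceval P X Y *m S = nceval P (invmx S *m X *m S) (invmx S *m Y *m S).
Proof.
move=> uS; elim: P => [c| | |P1 IH1 P2 IH2|P1 IH1 P2 IH2] //=.
- by rewrite mul_mx_scalar -scalemxAl mulVmx // scalemx1.
- by rewrite mulmxDr mulmxDl IH1 IH2.
- rewrite -IH1 -IH2 !mulmxA; congr (_ *m _).
  by rewrite -!mulmxA [S *m (invmx S *m _)]mulmxA mulmxV // mul1mx.
Qed.

Lemma slice_spatial_of_triple (p q r : nat) (T : 'I_3 -> 'I_p -> 'I_q -> ncpoly F)
    (X Y : 'M[F]_r) k :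
  slice (spatial_of_triple T X Y) k = ncsubst (T k) X Y.
Proof. by apply/matrixP => i j; rewrite mxE. Qed.

Lemma ncsubst_conj (p q r : nat) (P : 'I_p -> 'I_q -> ncpoly F) (X Y S : 'M[F]_r) :
  S \in unitmx ->
  ncsubst P (invmx S *m X *m S) (invmx S *m Y *m S) =
  (\mxdiag_(i < p) invmx S) *m ncsubst P X Y *m \mxdiag_(j < q) S.
Proof.
move=> uS; apply/mxblockP => i j; rewrite !submxblockM.
rewrite (bigD1 j) //= [X in _ + X]big1 => [|k /negbTE njk]; last first.
  by rewrite submxblock_mxdiag njk mulmx0.
rewrite submxblock_mxdiag eqxx addr0 submxblockM (bigD1 i) //= big1 => [|k /negbTE nik].
  by rewrite submxblock_mxdiag eqxx addr0 /ncsubst !mxblockK nceval_conj.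
by rewrite submxblock_mxdiag eq_sym nik mul0mx.
Qed.

Lemma pair_similar_spatial_equiv (p q r : nat) (T : 'I_3 -> 'I_p -> 'I_q -> ncpoly F)
    (X Y X' Y' : 'M[F]_r) :
  pair_similar X Y X' Y' ->
  spatial_equiv (spatial_of_triple T X Y) (spatial_of_triple T X' Y').
Proof.
case=> S [uS [-> ->]]; apply/spatial_equivP.
exists (\mxdiag_(i < p) invmx S)^T, (\mxdiag_(j < q) S), 1%:M.
split; rewrite ?unitmx_tr ?unitmx_mxdiag_const ?unitmx_inv ?unitmx1 // => k'.
have -> : \sum_k (1%:M : 'M[F]_3) k k' *: slice (spatial_of_triple T X Y) k =
    slice (spatial_of_triple T X Y) k'.
  rewrite (bigD1 k') //= [X in _ + X]big1 => [|k /negbTE nkk']; last first.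
    by rewrite mxE nkk' scale0r.
  by rewrite mxE eqxx scale1r addr0.
by rewrite trmxK !slice_spatial_of_triple ncsubst_conj.
Qed.

End SpatialMatrices.

Section Construction.
Variable F : fieldType.

(* The core slices are [1 0 0 0; 0 1 0 0], [1 0 x1 1; 0 0 x2 1] and [0 0 1 0; 0 0 0 1]. *)
Definition core_entry (k a d : nat) : ncpoly F :=
  match k, a, d with
  | 0, 0, 0 | 0, 1, 1 => NCconst 1
  | 1, 0, 0 | 1, 0, 3 | 1, 1, 3 => NCconst 1
  | 1, 0, 2 => NCx1
  | 1, 1, 2 => NCx2
  | 2, 0, 2 | 2, 1, 3 => NCconst 1
  | _, _, _ => NCconst 0
  end.

Definition tail (m : 'I_7) : 'I_3 :=
  if m == 0 :> nat then 0 else if (m < 3)%N then 1 else 2.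

Definition pair_triple (k : 'I_3) (i : 'I_(2 + 7)) (j : 'I_(4 + 7)) : ncpoly F :=
  match split i, split j with
  | inl a, inl d => core_entry k a d
  | inr m, inr m' => NCconst ((m == m') && (tail m == k))%:R
  | _, _ => NCconst 0
  end.

Definition core_row (a : 'I_2) : 'I_(2 + 7) := lshift 7 a.
Definition tail_row (m : 'I_7) : 'I_(2 + 7) := rshift 2 m.
Definition core_col (d : 'I_4) : 'I_(4 + 7) := lshift 7 d.
Definition tail_col (m : 'I_7) : 'I_(4 + 7) := rshift 4 m.

Lemma pair_triple_core k a d :
  pair_triple k (core_row a) (core_col d) = core_entry k a d.
Proof. by rewrite /pair_triple !split_lshift. Qed.

Lemma pair_triple_core_tail k a m : pair_triple k (core_row a) (tail_col m) = NCconst 0.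
Proof. by rewrite /pair_triple split_lshift split_rshift. Qed.

Lemma pair_triple_tail_core k m d : pair_triple k (tail_row m) (core_col d) = NCconst 0.
Proof. by rewrite /pair_triple split_lshift split_rshift. Qed.

Lemma pair_triple_tail k m m' :
  pair_triple k (tail_row m) (tail_col m') = NCconst ((m == m') && (tail m == k))%:R.
Proof. by rewrite /pair_triple !split_rshift. Qed.

End Construction.

Section Pencil.
Variables (F : fieldType) (r : nat).
Implicit Types (c : 'I_3 -> F) (X Y : 'M[F]_r).

Definition pencil c X Y : 'M[F]_(\sum_(i < 2 + 7) r, \sum_(j < 4 + 7) r) :=
  \sum_k c k *: ncsubst (pair_triple F k) X Y.

Lemma submxblock_pencil c X Y i j :
  submxblock (pencil c X Y) i j = \sum_k c k *: nceval (pair_triple F k i j) X Y.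
Proof.
rewrite submxblock_sum; apply: eq_bigr => k _.
by rewrite submxblockZ /ncsubst mxblockK.
Qed.

Lemma pencil_core c X Y a d :
  submxblock (pencil c X Y) (core_row a) (core_col d) =
  \sum_k c k *: nceval (core_entry F k a d) X Y.
Proof. by rewrite submxblock_pencil; under eq_bigr do rewrite pair_triple_core. Qed.

Lemma pencil_core_tail c X Y a m : submxblock (pencil c X Y) (core_row a) (tail_col m) = 0.
Proof.
by rewrite submxblock_pencil big1 // => k _; rewrite pair_triple_core_tail /= raddf0 scaler0.
Qed.

Lemma pencil_tail_core c X Y m d : submxblock (pencil c X Y) (tail_row m) (core_col d) = 0.
Proof.
by rewrite submxblock_pencil big1 // => k _; rewrite pair_triple_tail_core /= raddf0 scaler0.
Qed.

Lemma pencil_tail c X Y m m' :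
  submxblock (pencil c X Y) (tail_row m) (tail_col m') =
  if m == m' then (c (tail m))%:M else 0.
Proof.
rewrite submxblock_pencil (bigD1 (tail m)) //= big1 => [|k /negbTE nk]; last first.
  by rewrite pair_triple_tail (eq_sym (tail m)) nk andbF /= raddf0 scaler0.
rewrite pair_triple_tail eqxx andbT addr0; case: eqP => _ /=.
  by rewrite scalemx1.
by rewrite raddf0 scaler0.
Qed.

End Pencil.

Section TailWeights.
Variables (F : fieldType) (r : nat).
Implicit Types c : 'I_3 -> F.

Definition weight c : nat := \sum_(k < 3) (c k != 0%R) * 2 ^ k.

Definition tail_diag c : 'M[F]_(\sum_(m < 7) r) := \mxdiag_m (c (tail m))%:M.

Lemma rank_tail_diag c : \rank (tail_diag c) = (weight c * r)%N.
Proof.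
have rank_scalar (a : F) : \rank (a%:M : 'M[F]_r) = ((a != 0%R) * r)%N.
  have [->|na] := eqVneq a 0; first by rewrite raddf0 mxrank0.
  by rewrite -scalemx1 mxrank_scale_nz // mxrank1 mul1n.
rewrite rank_mxdiag /weight !big_ord_recl !big_ord0 !rank_scalar /tail /=.
have -> : lift ord0 ord0 = 1 :> 'I_3 by apply: val_inj.
have -> : lift ord0 (lift ord0 ord0) = 2 :> 'I_3 by apply: val_inj.
have -> : ord0 = 0 :> 'I_3 by apply: val_inj.
by rewrite /bump /=; case: (c 0 != 0); case: (c 1 != 0); case: (c 2 != 0); ring.
Qed.

Lemma weight_pow2 c (k' : 'I_3) : weight c = (2 ^ k')%N -> forall k, (c k != 0) = (k == k').
Proof.
rewrite /weight !big_ord_recl big_ord0 /bump /=.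
have -> : lift ord0 ord0 = 1 :> 'I_3 by apply: val_inj.
have -> : lift ord0 (lift ord0 ord0) = 2 :> 'I_3 by apply: val_inj.
have -> : ord0 = 0 :> 'I_3 by apply: val_inj.
move=> w k; case: (ord3P k') w => ->; case: (ord3P k) => ->;
  by case: (c 0 != 0); case: (c 1 != 0); case: (c 2 != 0).
Qed.

Lemma weight_delta (k' : 'I_3) : weight (fun k => (k == k')%:R) = (2 ^ k')%N.
Proof.
rewrite /weight (bigD1 k') //= big1 => [|k /negbTE nk]; last by rewrite nk eqxx.
by rewrite eqxx oner_neq0 mul1n addn0.
Qed.

End TailWeights.

Section CoreSystem.
Variables (F : fieldType) (r : nat) (X Y X' Y' : 'M[F]_r).
Variables (l : 'I_2 -> 'I_2 -> 'M[F]_r) (w : 'I_4 -> 'I_4 -> 'M[F]_r) (t : 'I_3 -> F).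
Hypothesis t_neq0 : forall k, t k != 0.
Hypothesis core_eq : forall k a (d : 'I_4),
  t k *: \sum_(a2 < 2) l a a2 *m nceval (core_entry F k a2 d) X Y =
  \sum_(d2 < 4) nceval (core_entry F k a d2) X' Y' *m w d2 d.

Local Ltac core_simpl :=
  rewrite !sum_ord2 !sum_ord4 /= !raddf0
    ?(mulmx0, mul0mx, mulmx1, mul1mx, addr0, add0r, scaler0).

Lemma core_system_offdiag : l 1 0 = 0 /\ l 0 1 = 0.
Proof.
move: (core_eq 1 1 0) (core_eq 1 0 1) (core_eq 2 0 0) (core_eq 2 1 0) (core_eq 0 0 1)
  (core_eq 2 0 1) (core_eq 2 1 1); core_simpl.
move=> e10 e01 w20 w30 w01 w21 w31.
rewrite -w20 -w30 mulmx0 addr0 in e10; rewrite -w01 -w21 -w31 mulmx0 !addr0 in e01.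
split; first by apply: (scalerI (t_neq0 1)); rewrite scaler0.
by apply: (scalerI (t_neq0 0)); rewrite scaler0 -e01.
Qed.

Lemma core_system_similar : (0 < r)%N -> l 0 0 \in unitmx -> pair_similar X Y X' Y'.
Proof.
move=> r_gt0 ul00; have [l10 l01] := core_system_offdiag.
move: (core_eq 2 0 3) (core_eq 2 1 3) (core_eq 0 0 3) (core_eq 2 0 2) (core_eq 2 1 2)
  (core_eq 0 0 2) (core_eq 1 1 3) (core_eq 1 0 3) (core_eq 1 0 2) (core_eq 1 1 2).
core_simpl; rewrite l10 l01 => <- <- <- <- <- <-.
rewrite !(scaler0, mulmx0, mul0mx, addr0, add0r) -!scalemxAr => e13 e03 e02 e12.
have l00_neq0 : l 0 0 != 0.
  apply: contraTneq ul00 => l00_0; apply/negP => /mulmxV.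
  rewrite l00_0 mul0mx => /matrixP/(_ (Ordinal r_gt0) (Ordinal r_gt0)).
  by rewrite !mxE eqxx => /eqP; rewrite eq_sym oner_eq0.
have t12 : t 1 = t 2.
  (* By e03 and e13, t1 (t1 l00) = t2 (t1 l11) = t2 (t2 l11) = t2 (t1 l00). *)
  apply: (mulIf (t_neq0 1)); apply/eqP; rewrite -subr_eq0.
  have /eqP : (t 1 * t 1 - t 2 * t 1) *: l 0 0 = 0.
    by rewrite scalerBl -!scalerA e03 scalerA mulrC -scalerA -e13 scalerA subrr.
  by rewrite scaler_eq0 (negbTE l00_neq0) orbF.
have l11E : l 1 1 = l 0 0 by apply: (scalerI (t_neq0 2)); rewrite -e03 t12.
rewrite t12 l11E in e12; rewrite t12 in e02.
exists (invmx (l 0 0)); rewrite unitmx_inv invmxK.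
by rewrite (scalerI (t_neq0 2) e02) (scalerI (t_neq0 2) e12) !mulmxK.
Qed.

End CoreSystem.

Section Reconstruction.
Variables (F : fieldType) (r : nat) (X Y X' Y' : 'M[F]_r) (T : 'M[F]_3).
Variables (L : 'M[F]_(\sum_(i < 2 + 7) r)) (W : 'M[F]_(\sum_(j < 4 + 7) r)).
Hypotheses (uT : T \in unitmx) (uL : L \in unitmx) (uW : W \in unitmx).
Hypothesis intertwine : forall k',
  L *m pencil (fun k => T k k') X Y = ncsubst (pair_triple F k') X' Y' *m W.

Local Notation Lb := (submxblock L).
Local Notation Wb := (submxblock W).
Local Notation P k' := (submxblock (pencil (fun k => T k k') X Y)).

Lemma intertwine_block k' i j :
  \sum_i2 Lb i i2 *m P k' i2 j = \sum_j2 nceval (pair_triple F k' i j2) X' Y' *m Wb j2 j.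
Proof.
have := congr1 (fun M => submxblock M i j) (intertwine k').
by rewrite /= !submxblockM => ->; apply: eq_bigr => j2 _; rewrite /ncsubst mxblockK.
Qed.

Lemma intertwine_tail_core k' m d :
  \sum_a Lb (tail_row m) (core_row a) *m P k' (core_row a) (core_col d) =
  if tail m == k' then Wb (tail_col m) (core_col d) else 0.
Proof.
have := intertwine_block k' (tail_row m) (core_col d); rewrite !sum_split_ord.
rewrite [X in _ + X = _]big1 => [|m2 _]; last by rewrite pencil_tail_core mulmx0.
rewrite addr0 => ->; rewrite [X in X + _]big1 => [|d2 _]; last first.
  by rewrite pair_triple_tail_core /= raddf0 mul0mx.
rewrite add0r (bigD1 m) //= big1 => [|m2 /negbTE nm]; last first.
  by rewrite pair_triple_tail (eq_sym m) nm /= raddf0 mul0mx.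
by rewrite pair_triple_tail eqxx addr0; case: eqP => _ /=; rewrite ?mul1mx // raddf0 mul0mx.
Qed.

Lemma tail_core_annihilators k' m : tail m != k' ->
  let Y0 := Lb (tail_row m) (core_row 0) in let Y1 := Lb (tail_row m) (core_row 1) in
  [/\ (T 0 k' + T 1 k') *: Y0 = 0, T 0 k' *: Y1 = 0 &
      T 1 k' *: Y0 + (T 1 k' + T 2 k') *: Y1 = 0].
Proof.
move=> /negbTE nk Y0 Y1; have eq_d d := intertwine_tail_core k' m d.
move: (eq_d 0) (eq_d 1) (eq_d 3); rewrite nk !sum_ord2 !pencil_core !sum_ord3 /=.
rewrite !raddf0 !addr0 !add0r !mulmx0 !addr0 !add0r -!scalerDl -!scalemxAr !mulmx1.
by rewrite -/Y0 -/Y1 => e0 e1 e3; split.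
Qed.

Lemma L_tail_core_eq0 m a : Lb (tail_row m) (core_row a) = 0.
Proof.
suff [Y00 Y10] : Lb (tail_row m) (core_row 0) = 0 /\ Lb (tail_row m) (core_row 1) = 0.
  by case: (ord2P a) => ->.
case: (boolP ((Lb (tail_row m) (core_row 0) != 0) || (Lb (tail_row m) (core_row 1) != 0)));
  last by rewrite negb_or !negbK => /andP[/eqP -> /eqP ->].
move=> /core_annihilators_collinear[v col_v].
have [k1 [k2 [nk12 nk1 nk2]]] := ord3_two_others (tail m).
have [b1 Tk1] : exists b, col k1 T = b *: v.
  by case: (tail_core_annihilators nk1) => e0 e1 e3; apply: col_v; rewrite !mxE.
have [b2 Tk2] : exists b, col k2 T = b *: v.
  by case: (tail_core_annihilators nk2) => e0 e1 e3; apply: col_v; rewrite !mxE.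
by case: (unitmx_cols_not_collinear uT nk12 Tk1 Tk2).
Qed.

Lemma W_tail_core_eq0 m d : Wb (tail_col m) (core_col d) = 0.
Proof.
have := intertwine_tail_core (tail m) m d; rewrite eqxx => <-.
by rewrite big1 // => a _; rewrite L_tail_core_eq0 mul0mx.
Qed.

Lemma intertwine_tail k' :
  drsubmxblock L *m tail_diag r (fun k => T k k') =
  tail_diag r (fun k => (k == k')%:R) *m drsubmxblock W.
Proof.
apply/mxblockP => m m'.
rewrite /drsubmxblock /tail_diag mul_mxblock_mxdiag mul_mxdiag_mxblock !mxblockK.
have := intertwine_block k' (tail_row m) (tail_col m'); rewrite !sum_split_ord.
rewrite [X in X + _ = _]big1 => [|a _]; last by rewrite pencil_core_tail mulmx0.
rewrite add0r (bigD1 m') //= [X in _ + X = _]big1 => [|m2 /negbTE nm]; last first.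
  by rewrite pencil_tail nm mulmx0.
rewrite pencil_tail eqxx addr0 => ->.
rewrite [X in X + _]big1 => [|d _]; last by rewrite pair_triple_tail_core /= raddf0 mul0mx.
rewrite add0r (bigD1 m) //= big1 => [|m2 /negbTE nm]; last first.
  by rewrite pair_triple_tail (eq_sym m) nm /= raddf0 mul0mx.
by rewrite pair_triple_tail eqxx addr0.
Qed.

Hypothesis r_gt0 : (0 < r)%N.

Lemma intertwine_diagonal k k' : (T k k' != 0) = (k == k').
Proof.
have uLt : drsubmxblock L \in unitmx.
  exact: unitmx_drsubmxblock L_tail_core_eq0 (mulmxV uL).
have uWt : drsubmxblock W \in unitmx.
  exact: unitmx_drsubmxblock W_tail_core_eq0 (mulmxV uW).
apply: (weight_pow2 (c := fun k => T k k')); apply/eqP.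
rewrite -(eqn_pmul2r r_gt0) -(weight_delta F k') -!(@rank_tail_diag F r).
rewrite -(eqmxMfull _ (_ : row_full (drsubmxblock L))) ?row_full_unit //.
by rewrite intertwine_tail mxrankMfree ?row_free_unit.
Qed.

Lemma pencil_core_diagonal k' a d :
  submxblock (pencil (fun k => T k k') X Y) (core_row a) (core_col d) =
  T k' k' *: nceval (core_entry F k' a d) X Y.
Proof.
rewrite pencil_core (bigD1 k') //= big1 ?addr0 // => k nk.
by move: (intertwine_diagonal k k'); rewrite (negbTE nk) => /negbFE/eqP->; rewrite scale0r.
Qed.

Lemma intertwine_core k' a (d : 'I_4) :
  T k' k' *: \sum_(a2 < 2) Lb (core_row a) (core_row a2) *m nceval (core_entry F k' a2 d) X Y =
  \sum_(d2 < 4) nceval (core_entry F k' a d2) X' Y' *m Wb (core_col d2) (core_col d).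
Proof.
have := intertwine_block k' (core_row a) (core_col d); rewrite !sum_split_ord.
rewrite [X in _ + X = _]big1 => [|m _]; last by rewrite pencil_tail_core mulmx0.
rewrite [X in _ = _ + X]big1 => [|m _]; last by rewrite pair_triple_core_tail /= raddf0 mul0mx.
rewrite !addr0 scaler_sumr => E.
transitivity (\sum_(a2 < 2) Lb (core_row a) (core_row a2) *m P k' (core_row a2) (core_col d)).
  by apply: eq_bigr => a2 _; rewrite pencil_core_diagonal scalemxAr.
by rewrite E; apply: eq_bigr => d2 _; rewrite pair_triple_core.
Qed.

Lemma intertwine_pair_similar : pair_similar X Y X' Y'.
Proof.
have T_neq0 k : T k k != 0 by rewrite intertwine_diagonal.
have core_eq := intertwine_core.
have [l10 _] := core_system_offdiag
  (l := fun a a2 => Lb (core_row a) (core_row a2)) T_neq0 core_eq.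
apply: (core_system_similar T_neq0 core_eq r_gt0) => /=.
have := congr1 (fun M => submxblock M (core_row 0) (core_row 0)) (mulVmx uL).
rewrite /= submxblockM submxblock1 eqxx sum_split_ord [X in _ + X]big1 => [|m _]; last first.
  by rewrite L_tail_core_eq0 mulmx0.
by rewrite addr0 sum_ord2 l10 mulmx0 addr0 => /mulmx1_unit[].
Qed.

End Reconstruction.

Theorem theorem4p2 (F : fieldType) :
  exists (p q : nat) (T : 'I_3 -> 'I_p -> 'I_q -> ncpoly F),
    forall (r : nat) (X Y X' Y' : 'M[F]_r),
      pair_similar X Y X' Y' <->
      spatial_equiv (spatial_of_triple T X Y) (spatial_of_triple T X' Y').
Proof.
exists (2 + 7)%N, (4 + 7)%N, (pair_triple F) => r X Y X' Y'.
split; first exact: pair_similar_spatial_equiv.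
have [r0 _|r_gt0] := posnP r.
  by subst r; exists 1%:M; split; [exact: unitmx1 | split; apply/matrixP => -[]].
case/spatial_equivP => R [S [T [uR uS uT eqA']]].
apply: (@intertwine_pair_similar F r X Y X' Y' T R^T (invmx S));
  rewrite ?unitmx_tr ?unitmx_inv // => k'.
rewrite -slice_spatial_of_triple eqA' mulmxK //; congr (_ *m _).
by apply: eq_bigr => k _; rewrite slice_spatial_of_triple.
Qed.
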